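(* If $\pi\in\mathcal A_n$ and $\sigma\in\mathcal A_m$, then $\pi[\sigma]\in\mathcal A_{n+m-1}$.
   Context: $\mathcal A_{n}$ is the set of permutations $w\in S_{n}$ (one-line notation $w_1\cdots w_n$) avoiding all six vincular patterns below, where $w$ contains - $\underline{32}\,\underline{41}$ if there are $i,j$ with $i+2\le j\le n-1$ and $w_{j+1}<w_{i+1}<w_i<w_j$; - $\underline{14}\,\underline{23}$ if there are such $i,j$ with $w_i<w_j<w_{j+1}<w_{i+1}$; - $\underline{41}\,\underline{32}$ if there are such $i,j$ with $w_{i+1}<w_{j+1}<w_j<w_i$; - $\underline{23}\,\underline{14}$ if there are such $i,j$ with $w_j<w_i<w_{i+1}<w_{j+1}$; - $\underline{23}\,\underline{1}$ if there is $i$ with $i+1\le n-1$ and $w_n<w_i<w_{i+1}$; - $\underline{1}\,\underline{32}$ if there is $j$ with $2\le j\le n-1$ and $w_1<w_{j+1}<w_j$. Inflation at $1$: for $\pi\in S_n$ with $\pi_r=1$ and $\sigma=\sigma_1\cdots\sigma_m\in S_m$, $\pi[\sigma]\in S_{n+m-1}$ is the permutation obtained by replacing the entry $1$ of $\pi$ by the block $\sigma_1\cdots\sigma_m$ and adding $m-1$ to every other entry: $\pi[\sigma]=(\pi_1+m-1)\cdots(\pi_{r-1}+m-1)\,\sigma_1\cdots\sigma_m\,(\pi_{r+1}+m-1)\cdots(\pi_n+m-1)$. E.g. $213[1342]=513426$. *)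

From mathcomp Require Import all_boot.
Set Implicit Arguments. Unset Strict Implicit. Unset Printing Implicit Defensive.

(* A permutation w in S_n is represented in one-line notation as a sequence
   w = [:: w_1; ...; w_n] of naturals which is a rearrangement of 1..n. *)
Definition is_perm (n : nat) (w : seq nat) : Prop := perm_eq w (iota 1 n).

(* 1-indexed access: entry w i is w_i (for 1 <= i <= size w). *)
Definition ent (w : seq nat) (i : nat) : nat := nth 0 w i.-1.

Definition contains_3241 (w : seq nat) : Prop :=
  exists i j, [/\ 1 <= i, i + 2 <= j, j <= (size w).-1 &
    [/\ ent w j.+1 < ent w i.+1, ent w i.+1 < ent w i & ent w i < ent w j]].
Definition contains_1423 (w : seq nat) : Prop :=
  exists i j, [/\ 1 <= i, i + 2 <= j, j <= (size w).-1 &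
    [/\ ent w i < ent w j, ent w j < ent w j.+1 & ent w j.+1 < ent w i.+1]].
Definition contains_4132 (w : seq nat) : Prop :=
  exists i j, [/\ 1 <= i, i + 2 <= j, j <= (size w).-1 &
    [/\ ent w i.+1 < ent w j.+1, ent w j.+1 < ent w j & ent w j < ent w i]].
Definition contains_2314 (w : seq nat) : Prop :=
  exists i j, [/\ 1 <= i, i + 2 <= j, j <= (size w).-1 &
    [/\ ent w j < ent w i, ent w i < ent w i.+1 & ent w i.+1 < ent w j.+1]].
(* w contains 23-1 (the 1 being the last entry w_n) *)
Definition contains_231 (w : seq nat) : Prop :=
  exists i, [/\ 1 <= i, i.+1 <= (size w).-1 &
    ent w (size w) < ent w i /\ ent w i < ent w i.+1].
(* w contains 1-32 (the 1 being the first entry w_1) *)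
Definition contains_132 (w : seq nat) : Prop :=
  exists j, [/\ 2 <= j, j <= (size w).-1 &
    ent w 1 < ent w j.+1 /\ ent w j.+1 < ent w j].

Definition inA (n : nat) (w : seq nat) : Prop :=
  is_perm n w /\ ~ contains_3241 w /\ ~ contains_1423 w /\ ~ contains_4132 w /\
  ~ contains_2314 w /\ ~ contains_231 w /\ ~ contains_132 w.

Definition inflate (pi sigma : seq nat) : seq nat :=
  flatten [seq if x == 1 then sigma else [:: x + (size sigma).-1] | x <- pi].

From mathcomp Require Import all_boot zify.
Set Implicit Arguments. Unset Strict Implicit. Unset Printing Implicit Defensive.

(* Write pi = p1 ++ 1 :: p2, so that the inflation is p1' ++ sigma ++ p2' with
   p1', p2' shifted up by m - 1.  Collapsing the block sigma onto the position
   of 1 maps positions weakly monotonically onto those of pi and preserves the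
   relative order of two entries not both in the block, since the block lies
   below every shifted entry.  So a pattern occurrence either lies in the block
   (an occurrence in sigma), or meets it in at most one entry (an occurrence in
   pi); the value constraints leave only one other configuration, turning 41-32
   (resp. 23-14) into 1-32 (resp. 23-1) inside sigma. *)

Definition avoids_patterns (w : seq nat) : Prop :=
  ~ contains_3241 w /\ ~ contains_1423 w /\ ~ contains_4132 w /\
  ~ contains_2314 w /\ ~ contains_231 w /\ ~ contains_132 w.

Lemma contains_3241_at w q1 q2 q3 q4 : 0 < q1 -> q2 = q1.+1 -> q1 + 2 <= q3 ->
  q4 = q3.+1 -> q3 <= (size w).-1 ->
  ent w q4 < ent w q2 -> ent w q2 < ent w q1 -> ent w q1 < ent w q3 -> contains_3241 w.
Proof. by move=> ? -> ? -> *; exists q1, q3. Qed.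

Lemma contains_1423_at w q1 q2 q3 q4 : 0 < q1 -> q2 = q1.+1 -> q1 + 2 <= q3 ->
  q4 = q3.+1 -> q3 <= (size w).-1 ->
  ent w q1 < ent w q3 -> ent w q3 < ent w q4 -> ent w q4 < ent w q2 -> contains_1423 w.
Proof. by move=> ? -> ? -> *; exists q1, q3. Qed.

Lemma contains_4132_at w q1 q2 q3 q4 : 0 < q1 -> q2 = q1.+1 -> q1 + 2 <= q3 ->
  q4 = q3.+1 -> q3 <= (size w).-1 ->
  ent w q2 < ent w q4 -> ent w q4 < ent w q3 -> ent w q3 < ent w q1 -> contains_4132 w.
Proof. by move=> ? -> ? -> *; exists q1, q3. Qed.

Lemma contains_2314_at w q1 q2 q3 q4 : 0 < q1 -> q2 = q1.+1 -> q1 + 2 <= q3 ->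
  q4 = q3.+1 -> q3 <= (size w).-1 ->
  ent w q3 < ent w q1 -> ent w q1 < ent w q2 -> ent w q2 < ent w q4 -> contains_2314 w.
Proof. by move=> ? -> ? -> *; exists q1, q3. Qed.

Lemma contains_231_at w q1 q2 qn : 0 < q1 -> q2 = q1.+1 -> q2 <= (size w).-1 ->
  qn = size w -> ent w qn < ent w q1 -> ent w q1 < ent w q2 -> contains_231 w.
Proof. by move=> ? -> ? -> *; exists q1. Qed.

Lemma contains_132_at w q1 q2 q3 : q1 = 1 -> 1 < q2 -> q3 = q2.+1 ->
  q2 <= (size w).-1 -> ent w q1 < ent w q3 -> ent w q3 < ent w q2 -> contains_132 w.
Proof. by move=> -> ? -> *; exists q2. Qed.

Lemma is_perm_split n pi : 0 < n -> is_perm n pi ->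
  exists p1 p2, pi = p1 ++ 1 :: p2 /\ {in p1 ++ p2, forall x, 1 < x}.
Proof.
move=> n_gt0 pi_perm.
have mem_pi x : (x \in pi) = (0 < x <= n) by rewrite (perm_mem pi_perm) mem_iota; lia.
have one_in : 1 \in pi by rewrite mem_pi n_gt0.
move: pi_perm mem_pi; case/splitPr: one_in => p1 p2 pi_perm mem_pi.
exists p1, p2; split=> // x x_rest.
have: uniq (p1 ++ 1 :: p2) by rewrite (perm_uniq pi_perm) iota_uniq.
rewrite uniq_catC /= mem_cat orbC -mem_cat => /andP[one_notin _].
have: x \in p1 ++ 1 :: p2 by move: x_rest; rewrite !mem_cat in_cons => /orP[]->; rewrite ?orbT.
have x_neq1 : x != 1 by apply: contraNneq one_notin => <-.
by rewrite mem_pi; lia.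
Qed.

Lemma is_perm_le_size n s : is_perm n s -> {in s, forall x, x <= size s}.
Proof.
by move=> s_perm x; rewrite (perm_mem s_perm) (perm_size s_perm) mem_iota size_iota; lia.
Qed.

Lemma inflate_cat1 (p1 p2 sigma : seq nat) : 1 \notin p1 ++ p2 ->
  inflate (p1 ++ 1 :: p2) sigma =
  [seq x + (size sigma).-1 | x <- p1] ++ sigma ++ [seq x + (size sigma).-1 | x <- p2].
Proof.
have flat1 s : 1 \notin s ->
    flatten [seq if x == 1 then sigma else [:: x + (size sigma).-1] | x <- s]
    = [seq x + (size sigma).-1 | x <- s].
  by elim: s => //= x s IH; rewrite in_cons negb_or eq_sym => /andP[/negbTE-> /IH->].
rewrite mem_cat negb_or => /andP[p1N1 p2N1].
by rewrite /inflate map_cat flatten_cat /= !flat1.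
Qed.

Lemma inflate_perm n m pi sigma : 0 < n -> 0 < m ->
  is_perm n pi -> is_perm m sigma -> is_perm (n + m - 1) (inflate pi sigma).
Proof.
move=> n_gt0 m_gt0 pi_perm sigma_perm.
have [p1 [p2 [def_pi rest_gt1]]] := is_perm_split n_gt0 pi_perm.
have one_notin : 1 \notin p1 ++ p2 by apply/negP=> /rest_gt1.
rewrite /is_perm def_pi inflate_cat1 // (perm_size sigma_perm) size_iota.
have -> : n + m - 1 = m + n.-1 by lia.
rewrite iotaD perm_catCA -map_cat; apply: perm_cat => //.
have -> : 1 + m = m.-1 + 2 by lia.
rewrite iotaDl (eq_map (fun x => addnC x m.-1)) perm_map //.
move: pi_perm; rewrite /is_perm def_pi -(prednK n_gt0) /=.
by rewrite -[1 :: p2]cat1s (perm_catCA p1) /= perm_cons.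
Qed.

(* Position k of p1' ++ block ++ p2', with a = size p1 and m the block size,
   collapsed to its position in p1 ++ 1 :: p2. *)
Definition deflate_pos a m k := if k <= a then k else if k <= a + m then a.+1 else k + 1 - m.

Section InflateAtOne.

Variables p1 p2 sigma : seq nat.
Hypothesis rest_gt1 : {in p1 ++ p2, forall x, 1 < x}.
Hypothesis sigma_gt0 : 0 < size sigma.
Hypothesis sigma_le : {in sigma, forall x, x <= size sigma}.

Local Notation m := (size sigma).
Local Notation a := (size p1).
Local Notation pi := (p1 ++ 1 :: p2).
Local Notation w := ([seq x + m.-1 | x <- p1] ++ sigma ++ [seq x + m.-1 | x <- p2]).
Local Notation d := (deflate_pos a m).

Lemma ent_inflate k : 0 < k <= a + m + size p2 ->
  [/\ k <= a, d k = k, ent w k = ent pi (d k) + m.-1 & 1 < ent pi (d k)]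
  \/ [/\ a < k <= a + m, d k = a.+1, ent w k = ent sigma (k - a),
         ent pi (d k) = 1 & ent sigma (k - a) <= m]
  \/ [/\ a + m < k, d k = k + 1 - m, ent w k = ent pi (d k) + m.-1 & 1 < ent pi (d k)].
Proof.
move=> k_range; rewrite /deflate_pos /ent !nth_cat !size_map.
case: (leqP k a) => [k_le_a | a_lt_k].
  have k_lt : k.-1 < a by lia.
  by left; rewrite k_lt (nth_map 0) //; split=> //; apply: rest_gt1; rewrite mem_cat mem_nth.
have -> : k.-1 < a = false by lia.
case: (leqP k (a + m)) => [k_le | k_gt]; [right; left | right; right].
  have k_lt : k.-1 - a < m by lia.
  have -> : (k - a).-1 = k.-1 - a by lia.
  by rewrite ltnn subnn k_lt; split=> //; apply: sigma_le; apply: mem_nth.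
have -> : k.-1 - a < m = false by lia.
have -> : (k + 1 - m).-1 < a = false by lia.
have -> : (k + 1 - m).-1 - a = (k.-1 - a - m).+1 by lia.
have k_lt : k.-1 - a - m < size p2 by lia.
rewrite /= (nth_map 0) //; split=> //.
by apply: rest_gt1; rewrite mem_cat mem_nth ?orbT.
Qed.

Let size_pi : size pi = a + (size p2).+1.
Proof. by rewrite size_cat. Qed.

Let size_w : size w = a + m + size p2.
Proof. by rewrite !size_cat !size_map addnA. Qed.

Local Ltac case_position k :=
  case: (@ent_inflate k ltac:(lia)) => [[? ? ? ?]|[[? ? ? ? ?]|[? ? ? ?]]]; try lia.

Lemma inflate_avoids_3241 :
  ~ contains_3241 pi -> ~ contains_3241 sigma -> ~ contains_3241 w.
Proof.
move=> pi_av sigma_av [i [j [? ? ? [? ? ?]]]].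
case_position i; case_position i.+1; case_position j; case_position j.+1; first
  [ apply: pi_av; apply: (@contains_3241_at _ (d i) (d i.+1) (d j) (d j.+1)); lia
  | apply: sigma_av; apply: (@contains_3241_at _ (i - a) (i.+1 - a) (j - a) (j.+1 - a)); lia].
Qed.

Lemma inflate_avoids_1423 :
  ~ contains_1423 pi -> ~ contains_1423 sigma -> ~ contains_1423 w.
Proof.
move=> pi_av sigma_av [i [j [? ? ? [? ? ?]]]].
case_position i; case_position i.+1; case_position j; case_position j.+1; first
  [ apply: pi_av; apply: (@contains_1423_at _ (d i) (d i.+1) (d j) (d j.+1)); lia
  | apply: sigma_av; apply: (@contains_1423_at _ (i - a) (i.+1 - a) (j - a) (j.+1 - a)); lia].
Qed.

Lemma inflate_avoids_4132 : ~ contains_4132 pi ->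
  ~ contains_4132 sigma -> ~ contains_132 sigma -> ~ contains_4132 w.
Proof.
move=> pi_av sigma_av sigma_av' [i [j [? ? ? [? ? ?]]]].
case_position i; case_position i.+1; case_position j; case_position j.+1; first
  [ apply: pi_av; apply: (@contains_4132_at _ (d i) (d i.+1) (d j) (d j.+1)); lia
  | apply: sigma_av; apply: (@contains_4132_at _ (i - a) (i.+1 - a) (j - a) (j.+1 - a)); lia
  | apply: sigma_av'; apply: (@contains_132_at _ (i.+1 - a) (j - a) (j.+1 - a)); lia].
Qed.

Lemma inflate_avoids_2314 : ~ contains_2314 pi ->
  ~ contains_2314 sigma -> ~ contains_231 sigma -> ~ contains_2314 w.
Proof.
move=> pi_av sigma_av sigma_av' [i [j [? ? ? [? ? ?]]]].
case_position i; case_position i.+1; case_position j; case_position j.+1; first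
  [ apply: pi_av; apply: (@contains_2314_at _ (d i) (d i.+1) (d j) (d j.+1)); lia
  | apply: sigma_av; apply: (@contains_2314_at _ (i - a) (i.+1 - a) (j - a) (j.+1 - a)); lia
  | apply: sigma_av'; apply: (@contains_231_at _ (i - a) (i.+1 - a) (j - a)); lia].
Qed.

Lemma inflate_avoids_231 :
  ~ contains_231 pi -> ~ contains_231 sigma -> ~ contains_231 w.
Proof.
move=> pi_av sigma_av [i [? ? [? ?]]].
case_position i; case_position i.+1; case_position (size w); first
  [ apply: pi_av; apply: (@contains_231_at _ (d i) (d i.+1) (d (size w))); lia
  | apply: sigma_av; apply: (@contains_231_at _ (i - a) (i.+1 - a) (size w - a)); lia].
Qed.

Lemma inflate_avoids_132 :
  ~ contains_132 pi -> ~ contains_132 sigma -> ~ contains_132 w.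
Proof.
move=> pi_av sigma_av [j [? ? [? ?]]].
case_position 1; case_position j; case_position j.+1; first
  [ apply: pi_av; apply: (@contains_132_at _ (d 1) (d j) (d j.+1)); lia
  | apply: sigma_av; apply: (@contains_132_at _ (1 - a) (j - a) (j.+1 - a)); lia].
Qed.

Lemma inflate_avoids_patterns :
  avoids_patterns pi -> avoids_patterns sigma -> avoids_patterns w.
Proof.
move=> [pi1 [pi2 [pi3 [pi4 [pi5 pi6]]]]] [s1 [s2 [s3 [s4 [s5 s6]]]]].
split; first exact: inflate_avoids_3241.
split; first exact: inflate_avoids_1423.
split; first exact: inflate_avoids_4132.
split; first exact: inflate_avoids_2314.
by split; [exact: inflate_avoids_231 | exact: inflate_avoids_132].
Qed.

End InflateAtOne.

Theorem mainTheorem13 (n m : nat) (pi sigma : seq nat) :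
  1 <= n -> 1 <= m -> inA n pi -> inA m sigma ->
  inA (n + m - 1) (inflate pi sigma).
Proof.
move=> n_gt0 m_gt0 [pi_perm pi_av] [sigma_perm sigma_av].
split; first exact: inflate_perm.
have [p1 [p2 [def_pi rest_gt1]]] := is_perm_split n_gt0 pi_perm.
have one_notin : 1 \notin p1 ++ p2 by apply/negP=> /rest_gt1.
have sigma_gt0 : 0 < size sigma by rewrite (perm_size sigma_perm) size_iota.
rewrite def_pi inflate_cat1 // in pi_av *.
exact: inflate_avoids_patterns (is_perm_le_size sigma_perm) pi_av sigma_av.
Qed.
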